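(* Let $P^1(z) = \tfrac12 z(1+z)$ and let $\mathcal K^1$ be the filled Julia set of $P^1$ (equivalently, the closure of the basin of attraction $U^1$ of the attracting fixed point $0$ of $P^1$). Fix bounds $d \ge 2$, $K \ge 2$, $M \ge \tfrac12$ and an escape radius $R$ for these bounds. Then there exist $\lambda > 1$ depending only on $P^1$ and $c > 0$ depending only on $d, K, M$ and $P^1$ such that the following holds: if $\{P_m\}_{m=1}^\infty$ is any bounded sequence of polynomials with bounds $d,K,M$ and $N \ge 1$ is such that $P_1 = P_2 = \cdots = P_N = P^1$, then \[ \mathrm m\big(\mathcal S^N \setminus \mathcal K^1\big) < c\,\lambda^{-N}, \] where $\mathcal S^N = Q_N^{-1}(\mathrm D(0,R))$ and $\mathrm m$ denotes two-dimensional Lebesgue measure.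
   Context: A bounded sequence of polynomials with bounds $d \ge 2$, $K \ge 1$, $M \ge 0$ is a sequence $\{P_m\}_{m=1}^\infty$ with $P_m(z) = a_{d_m,m}z^{d_m} + \dots + a_{0,m}$, $2 \le d_m \le d$, $1/K \le |a_{d_m,m}| < K$ and $|a_{k,m}| \le M$ for $0 \le k \le d_m - 1$. $Q_{m,n} = P_n \circ \cdots \circ P_{m+1}$ and $Q_N = Q_{0,N}$. An escape radius for the bounds is a number $R>0$, depending only on $d,K,M$, such that for every bounded sequence with these bounds, every $m \ge 0$ and every $|z| > R$, $|Q_{m,n}(z)| \to \infty$ as $n \to \infty$. $\mathrm D(a,r)$ denotes the open disc of centre $a$ and radius $r$. *)

From Stdlib Require Import Reals Lra.
Open Scope R_scope.

Definition Cx := (R * R)%type.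
Definition Cadd (z w : Cx) : Cx := (fst z + fst w, snd z + snd w).
Definition Cmul (z w : Cx) : Cx :=
  (fst z * fst w - snd z * snd w, fst z * snd w + snd z * fst w).
Definition Cnorm (z : Cx) : R := sqrt (fst z * fst z + snd z * snd z).
Definition Cone : Cx := (1, 0).
Fixpoint Cpow (z : Cx) (n : nat) : Cx :=
  match n with O => Cone | S n => Cmul z (Cpow z n) end.

Record cpoly := mkCpoly { deg : nat; coef : nat -> Cx }.

Fixpoint sum_upto (f : nat -> Cx) (n : nat) : Cx :=
  match n with O => f O | S n => Cadd (sum_upto f n) (f (S n)) end.

Definition peval (p : cpoly) (z : Cx) : Cx :=
  sum_upto (fun k => Cmul (coef p k) (Cpow z k)) (deg p).

Definition bounded_seq (d : nat) (K M : R) (P : nat -> cpoly) : Prop :=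
  forall m : nat, (1 <= m)%nat ->
    (2 <= deg (P m) <= d)%nat /\
    / K <= Cnorm (coef (P m) (deg (P m))) < K /\
    (forall k : nat, (k < deg (P m))%nat -> Cnorm (coef (P m) k) <= M).

(** Qfrom P m k = P_{m+k} o ... o P_{m+1}; thus Q_{m,n} = Qfrom P m (n-m)
    and Q_N = Qfrom P 0 N. *)
Fixpoint Qfrom (P : nat -> cpoly) (m k : nat) (z : Cx) : Cx :=
  match k with
  | O => z
  | S k' => peval (P (m + k)%nat) (Qfrom P m k' z)
  end.

Definition QN (P : nat -> cpoly) (N : nat) (z : Cx) : Cx := Qfrom P 0 N z.

Definition escape_radius (d : nat) (K M R0 : R) : Prop :=
  R0 > 0 /\
  forall P : nat -> cpoly, bounded_seq d K M P ->
  forall (m : nat) (z : Cx), Cnorm z > R0 ->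
  forall B : R, exists n0 : nat, forall k : nat, (n0 <= k)%nat ->
    Cnorm (Qfrom P m k z) > B.

Definition P1 (z : Cx) : Cx := Cmul (1/2, 0) (Cmul z (Cadd Cone z)).

Definition filled_julia_P1 (z : Cx) : Prop :=
  exists B : R, forall n : nat, Cnorm (Nat.iter n P1 z) <= B.

(** Two-dimensional Lebesgue (outer) measure, via countable covers by open
    rectangles (a,b) x (c,e).  [lebesgue_lt A t] means m(A) < t, i.e. the
    infimum of total areas of countable rectangle covers of A is < t, i.e.
    some cover has (convergent) total area < t. *)
Definition rect := (R * R * R * R)%type.
Definition in_rect (r : rect) (z : Cx) : Prop :=
  let '(a, b, c, e) := r in a < fst z < b /\ c < snd z < e.
Definition rect_area (r : rect) : R :=
  let '(a, b, c, e) := r in Rmax 0 (b - a) * Rmax 0 (e - c).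

Definition lebesgue_lt (A : Cx -> Prop) (t : R) : Prop :=
  exists (r : nat -> rect) (s : R),
    (forall z, A z -> exists n, in_rect (r n) z) /\
    infinite_sum (fun n => rect_area (r n)) s /\ s < t.

(* Write P^1(z) = z(1+z)/2.  The closed disc D = D(-1/2, 3/2) is forward
   invariant, so an orbit that ever enters D is bounded: points outside the
   filled Julia set K^1 have all iterates outside D.  Outside D the inverse
   branches of P^1 contract: if |z + 1/2| > 3/2 and |P^1(z) - c| < rho with
   rho small, then z lies within (7/10) rho of one of the two preimages of c
   (the two factors of 2(P^1(z) - c) have product < 2 rho and sum > 3).
   Starting from a finite cover of D(0, R) by G discs of radius 1/100 and
   pulling it back N times along both branches, the set S^N \ K^1 (where
   Q_N is the N-th iterate of P^1) is covered by G 2^N discs of radius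
   (7/10)^N / 100, of total area O((98/100)^N); hence lambda = 50/49. *)
From Stdlib Require Import Reals Lra Psatz ZArith.
From Coquelicot Require Import Rcomplements Complex.
Open Scope R_scope.

Section P1_local_dynamics.
Local Open Scope C_scope.

Lemma Cnorm_Cmod (z : C) : Cnorm z = Cmod z.
Proof. unfold Cnorm, Cmod. f_equal. ring. Qed.

Lemma P1_eq (z : C) : P1 z = z * (1 + z) / 2.
Proof.
  destruct z as [x y]. unfold P1, Cmul, Cadd, Cone.
  apply injective_projections; simpl; field.
Qed.

Lemma Cmod_nonneg_real (r : R) : 0 <= r -> Cmod r = r.
Proof. intros Hr. rewrite Cmod_R. now apply Rabs_pos_eq. Qed.

Definition csqrt (u : C) : C :=
  (sqrt ((Cmod u + Re u) / 2),
   (if Rle_dec 0 (Im u) then 1 else -1) * sqrt ((Cmod u - Re u) / 2))%R.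

Lemma csqrt_sqr (u : C) : csqrt u * csqrt u = u.
Proof.
  assert (Hm2 := Cmod2_alt u). assert (Hre := re_le_Cmod u).
  unfold csqrt. set (m := Cmod u) in *. destruct u as [x y]. simpl in *.
  apply Rabs_le_between in Hre.
  assert (Hp : (0 <= (m + x) / 2)%R) by lra.
  assert (Hn : (0 <= (m - x) / 2)%R) by lra.
  assert (Hprod : (sqrt ((m + x) / 2) * sqrt ((m - x) / 2) = Rabs y / 2)%R).
  { rewrite <- sqrt_mult_alt by lra.
    rewrite <- (sqrt_square (Rabs y / 2)) by (pose proof (Rabs_pos y); lra).
    f_equal. pose proof (Rsqr_abs y) as Hy. unfold Rsqr in Hy. nra. }
  pose proof (sqrt_sqrt _ Hp). pose proof (sqrt_sqrt _ Hn).
  destruct (Rle_dec 0 y).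
  - rewrite Rabs_right in Hprod by lra.
    apply injective_projections; simpl; nra.
  - rewrite Rabs_left in Hprod by lra.
    apply injective_projections; simpl; nra.
Qed.

Lemma P1_factor (z c s : C) : s * s = 2 * c + / 4 ->
  (z - (s - / 2)) * (z - (- s - / 2)) = 2 * (P1 z - c).
Proof.
  intros Hs. rewrite P1_eq.
  transitivity ((z + / 2) * (z + / 2) - s * s); [field|].
  rewrite Hs. field.
Qed.

Lemma small_product_large_sum (a b rho : R) :
  0 <= a -> 0 <= b -> a * b < 2 * rho -> 3 < a + b -> 0 < rho <= 1/100 ->
  a < 7/10 * rho \/ b < 7/10 * rho.
Proof.
  intros Ha Hb Hab Hsum Hrho.
  destruct (Rle_dec a b).
  - left. assert (a < 15/100) by nra. assert (a < 1/100) by nra. nra.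
  - right. assert (b < 15/100) by nra. assert (b < 1/100) by nra. nra.
Qed.

(* This uniform contraction of inverse branches is the source of lambda. *)
Lemma P1_pullback (z c s : C) (rho : R) :
  s * s = 2 * c + / 4 -> 0 < rho <= 1/100 ->
  Cmod (P1 z - c) < rho -> 3/2 < Cmod (z + / 2) ->
  Cmod (z - (s - / 2)) < 7/10 * rho \/ Cmod (z - (- s - / 2)) < 7/10 * rho.
Proof.
  intros Hs Hrho Hc Hz.
  set (A := z - (s - / 2)). set (B := z - (- s - / 2)).
  assert (Hprod : (Cmod A * Cmod B < 2 * rho)%R).
  { rewrite <- Cmod_mult. unfold A, B. rewrite (P1_factor z c s Hs).
    rewrite Cmod_mult, Cmod_nonneg_real by lra. lra. }
  assert (Hsum : (3 < Cmod A + Cmod B)%R).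
  { assert (E : A + B = 2 * (z + / 2)) by (unfold A, B; field).
    pose proof (Cmod_triangle A B) as Htri.
    rewrite E, Cmod_mult, Cmod_nonneg_real in Htri by lra. lra. }
  apply small_product_large_sum; auto using Cmod_ge_0.
Qed.

(* The closed disc D(-1/2, 3/2) is forward invariant under P^1, since
   P^1(z) + 1/2 = (z + 1/2)^2 / 2 + 3/8. *)
Lemma P1_disc_invariant (z : C) :
  Cmod (z + / 2) <= 3/2 -> Cmod (P1 z + / 2) <= 3/2.
Proof.
  intros Hz.
  assert (E : P1 z + / 2 = RtoC (/ 2) * ((z + / 2) * (z + / 2)) + RtoC (3/8)).
  { rewrite P1_eq. apply injective_projections; simpl; field. }
  rewrite E. eapply Rle_trans; [apply Cmod_triangle|].
  rewrite !Cmod_mult, !Cmod_nonneg_real by lra.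
  pose proof (Cmod_ge_0 (z + / 2)). nra.
Qed.

End P1_local_dynamics.

Lemma eventually_bounded (u : nat -> R) (i : nat) (B : R) :
  (forall n, (i <= n)%nat -> u n <= B) -> exists B', forall n, u n <= B'.
Proof.
  revert B. induction i as [|i IH]; intros B HB.
  - exists B. intros n. apply HB. lia.
  - apply (IH (Rmax B (u i))). intros n Hn.
    destruct (Nat.eq_dec n i) as [->|Hne]; [apply Rmax_r|].
    eapply Rle_trans; [apply HB; lia | apply Rmax_l].
Qed.

(* Points outside the filled Julia set never visit the invariant disc
   D(-1/2, 3/2): otherwise their orbit would stay bounded. *)
Lemma P1_orbit_escapes (z : C) : ~ filled_julia_P1 z ->
  forall i, 3/2 < Cmod (Nat.iter i P1 z + / 2)%C.
Proof.
  intros Hz i. apply Rnot_le_lt. intros Hin. apply Hz.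
  assert (Htrapped : forall k, Cmod (Nat.iter (k + i) P1 z + / 2)%C <= 3/2).
  { induction k as [|k IH]; [exact Hin|]. now apply P1_disc_invariant. }
  assert (Hhalf : Cmod (/ 2)%C = 1/2).
  { replace (/ 2)%C with (RtoC (/ 2)) by (apply injective_projections; simpl; field).
    rewrite Cmod_nonneg_real; lra. }
  apply (eventually_bounded _ i 2). intros n Hn.
  replace n with ((n - i) + i)%nat by lia.
  rewrite Cnorm_Cmod.
  set (w := Nat.iter (n - i + i) P1 z).
  replace w with (w + / 2 - / 2)%C by field.
  pose proof (Htrapped (n - i)%nat) as Hw. fold w in Hw.
  pose proof (Cmod_triangle (w + / 2) (- / 2)) as Htri.
  rewrite Cmod_opp, Hhalf in Htri. unfold Cminus. lra.
Qed.

Definition P1_branch (b : bool) (c : C) : C :=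
  let s := csqrt (2 * c + / 4)%C in
  if b then (s - / 2)%C else (- s - / 2)%C.

Lemma P1_pullback_branch (z c : C) (rho : R) : 0 < rho <= 1/100 ->
  Cmod (P1 z - c)%C < rho -> 3/2 < Cmod (z + / 2)%C ->
  exists b, Cmod (z - P1_branch b c)%C < 7/10 * rho.
Proof.
  intros Hrho Hc Hz.
  destruct (P1_pullback z c (csqrt (2 * c + / 4)%C) rho (csqrt_sqr _) Hrho Hc Hz)
    as [H | H]; [exists true | exists false]; exact H.
Qed.

(* Pulling back a family of centres c0 along j inverse branches: the centre
   with index n uses the last j binary digits of n to choose the branches
   and the remaining digits n / 2^j to choose the initial centre. *)
Fixpoint pullback_centres (c0 : nat -> C) (j n : nat) : C :=
  match j with
  | O => c0 n
  | S j => P1_branch (Nat.even n) (pullback_centres c0 j (Nat.div2 n))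
  end.

Lemma pullback_cover (c0 : nat -> C) (G : nat) (R0 rho : R) :
  0 < rho <= 1/100 ->
  (forall w, Cmod w < R0 -> exists n, (n < G)%nat /\ Cmod (w - c0 n)%C < rho) ->
  forall j z, (forall i, (i < j)%nat -> 3/2 < Cmod (Nat.iter i P1 z + / 2)%C) ->
  Cmod (Nat.iter j P1 z) < R0 ->
  exists n, (n < G * 2 ^ j)%nat /\
    Cmod (z - pullback_centres c0 j n)%C < rho * (7/10) ^ j.
Proof.
  intros Hrho Hcover j. induction j as [|j IH]; intros z Hout Hin.
  - destruct (Hcover z Hin) as [n [Hn Hz]]. exists n. split; simpl; [lia | lra].
  - destruct (IH (P1 z)) as [n [Hn Hz]].
    + intros i Hi. rewrite <- Nat.iter_succ_r. apply Hout. lia.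
    + rewrite <- Nat.iter_succ_r. exact Hin.
    + assert (Hpow : 0 < (7/10) ^ j <= 1).
      { split; [apply pow_lt; lra | rewrite <- (pow1 j); apply pow_incr; lra]. }
      destruct (P1_pullback_branch z (pullback_centres c0 j n) (rho * (7/10) ^ j))
        as [b Hb]; [nra | exact Hz | apply (Hout 0%nat); lia |].
      exists (Nat.b2n (negb b) + 2 * n)%nat. split.
      { rewrite Nat.pow_succ_r'. destruct b; simpl; nia. }
      replace (rho * (7/10) ^ S j) with (7/10 * (rho * (7/10) ^ j)) by (simpl; ring).
      destruct b.
      * cbn [pullback_centres Nat.b2n negb].
        now rewrite Nat.add_0_l, Nat.even_even, Nat.div2_double.
      * cbn [pullback_centres Nat.b2n negb].
        now rewrite (Nat.add_comm 1), Nat.even_odd, Nat.add_1_r, Nat.div2_succ_double.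
Qed.

Lemma grid_coordinate (L : nat) (h x : R) : 0 < h -> Rabs x < INR L * h ->
  exists k, (k < 2 * L + 1)%nat /\ Rabs (x - (INR k - INR L) * h) <= h.
Proof.
  intros Hh Hx. apply Rabs_def2 in Hx as [Hx1 Hx2].
  set (t := x / h + INR L).
  assert (Ht : 0 < t < 2 * INR L).
  { unfold t. split; apply Rmult_lt_reg_r with h; auto;
      unfold Rdiv; rewrite Rmult_plus_distr_r, Rmult_assoc, Rinv_l, Rmult_1_r by lra; lra. }
  destruct (archimed t) as [Hup1 Hup2].
  assert (Hpos : (0 < up t)%Z) by (apply lt_IZR; simpl; lra).
  exists (Z.to_nat (up t)).
  assert (E : INR (Z.to_nat (up t)) = IZR (up t)).
  { rewrite INR_IZR_INZ, Z2Nat.id; auto; lia. }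
  assert (Hx : x = (t - INR L) * h) by (unfold t; field; lra).
  split.
  - apply INR_lt. rewrite E, plus_INR, mult_INR. simpl. lra.
  - rewrite E. apply Rabs_le. split; nra.
Qed.

Definition grid (L : nat) (h : R) (n : nat) : C :=
  ((INR (n / (2 * L + 1)) - INR L) * h, (INR (n mod (2 * L + 1)) - INR L) * h).

Lemma disc_finite_cover (R0 rho : R) : 0 < rho ->
  exists (G : nat) (c0 : nat -> C),
    forall w, Cmod w < R0 -> exists n, (n < G)%nat /\ Cmod (w - c0 n)%C < rho.
Proof.
  intros Hrho. set (h := rho / 2).
  set (L := Z.to_nat (up (Rabs R0 / h))).
  assert (HL : Rabs R0 < INR L * h).
  { destruct (archimed (Rabs R0 / h)) as [Hup _].
    assert (0 <= Rabs R0 / h) by (apply Rdiv_le_0_compat; [apply Rabs_pos | unfold h; lra]).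
    assert (Hpos : (0 < up (Rabs R0 / h))%Z) by (apply lt_IZR; simpl; lra).
    unfold L. rewrite INR_IZR_INZ, Z2Nat.id by lia.
    replace (Rabs R0) with (Rabs R0 / h * h) at 1 by (field; unfold h; lra).
    apply Rmult_lt_compat_r; [unfold h; lra | lra]. }
  exists ((2 * L + 1) * (2 * L + 1))%nat, (grid L h).
  intros w Hw.
  assert (Hfst : Rabs (fst w) < INR L * h).
  { pose proof (Rmax_Cmod w). pose proof (Rmax_l (Rabs (fst w)) (Rabs (snd w))).
    pose proof (Rle_abs R0). lra. }
  assert (Hsnd : Rabs (snd w) < INR L * h).
  { pose proof (Rmax_Cmod w). pose proof (Rmax_r (Rabs (fst w)) (Rabs (snd w))).
    pose proof (Rle_abs R0). lra. }
  assert (Hh : 0 < h) by (unfold h; lra).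
  destruct (grid_coordinate L h (fst w) Hh Hfst) as [k1 [Hk1 Hd1]].
  destruct (grid_coordinate L h (snd w) Hh Hsnd) as [k2 [Hk2 Hd2]].
  exists (k1 * (2 * L + 1) + k2)%nat. split; [nia|].
  assert (Hdiv : ((k1 * (2 * L + 1) + k2) / (2 * L + 1) = k1)%nat).
  { symmetry. apply Nat.div_unique with (r := k2); lia. }
  assert (Hmod : ((k1 * (2 * L + 1) + k2) mod (2 * L + 1) = k2)%nat).
  { symmetry. apply Nat.mod_unique with (q := k1); lia. }
  assert (Hsqrt2 : sqrt 2 < 2).
  { rewrite <- (sqrt_square 2) at 2 by lra. apply sqrt_lt_1; lra. }
  eapply Rle_lt_trans; [apply Cmod_2Rmax|].
  unfold grid. rewrite Hdiv, Hmod. cbn [fst snd Cminus Cplus Copp].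
  apply Rle_lt_trans with (sqrt 2 * h).
  - apply Rmult_le_compat_l; [apply sqrt_pos | apply Rmax_lub; assumption].
  - unfold h. nra.
Qed.

Definition square (c : C) (r : R) : rect :=
  (fst c - r, fst c + r, snd c - r, snd c + r).

Lemma disc_in_square (c z : C) (r : R) : Cmod (z - c)%C < r -> in_rect (square c r) z.
Proof.
  intros Hz. pose proof (Rmax_Cmod (z - c)%C) as Hmax.
  change (Rmax (Rabs (fst z - fst c)) (Rabs (snd z - snd c)) <= Cmod (z - c)%C) in Hmax.
  assert (H1 : Rabs (fst z - fst c) < r).
  { pose proof (Rmax_l (Rabs (fst z - fst c)) (Rabs (snd z - snd c))). lra. }
  assert (H2 : Rabs (snd z - snd c) < r).
  { pose proof (Rmax_r (Rabs (fst z - fst c)) (Rabs (snd z - snd c))). lra. }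
  apply Rabs_def2 in H1, H2. unfold square, in_rect. lra.
Qed.

Lemma square_area (c : C) (r : R) : 0 <= r -> rect_area (square c r) = (2 * r) ^ 2.
Proof.
  intros Hr. unfold square, rect_area.
  rewrite !Rmax_right by lra. ring.
Qed.

Lemma infinite_sum_finite_support (u : nat -> R) (K : nat) :
  (forall n, (K < n)%nat -> u n = 0) -> infinite_sum u (sum_f_R0 u K).
Proof.
  intros Hu eps Heps. exists K. intros n Hn. unfold Rdist.
  replace (sum_f_R0 u n) with (sum_f_R0 u K); [rewrite Rminus_diag, Rabs_R0; lra|].
  induction Hn as [|n Hn IH]; [reflexivity|].
  simpl. rewrite Hu by lia. rewrite <- IH. ring.
Qed.

Lemma partial_sum_bound (u : nat -> R) (a : R) (K : nat) :
  (forall n, (n < K)%nat -> u n <= a) -> sum_f_R0 u K <= INR K * a + u K.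
Proof.
  induction K as [|K IH]; intros Hu; [simpl; lra|].
  simpl sum_f_R0. rewrite S_INR.
  assert (sum_f_R0 u K <= INR K * a + u K) by (apply IH; intros; apply Hu; lia).
  assert (u K <= a) by (apply Hu; lia). lra.
Qed.

Lemma lebesgue_lt_disc_cover (A : Cx -> Prop) (c : nat -> C) (K : nat) (r t : R) :
  0 <= r -> (forall z, A z -> exists n, (n < K)%nat /\ Cmod (z - c n)%C < r) ->
  INR K * (2 * r) ^ 2 < t -> lebesgue_lt A t.
Proof.
  intros Hr Hcover Ht.
  set (rects := fun n => if (n <? K)%nat then square (c n) r else (0, 0, 0, 0)).
  assert (Harea_in : forall n, (n < K)%nat -> rect_area (rects n) = (2 * r) ^ 2).
  { intros n Hn. unfold rects. rewrite (proj2 (Nat.ltb_lt n K) Hn).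
    now apply square_area. }
  assert (Harea_out : forall n, (K <= n)%nat -> rect_area (rects n) = 0).
  { intros n Hn. unfold rects. rewrite (proj2 (Nat.ltb_ge n K) Hn).
    unfold rect_area. rewrite Rmax_left by lra. ring. }
  exists rects, (sum_f_R0 (fun n => rect_area (rects n)) K). split; [|split].
  - intros z Hz. destruct (Hcover z Hz) as [n [Hn Hzn]]. exists n.
    unfold rects. rewrite (proj2 (Nat.ltb_lt n K) Hn). now apply disc_in_square.
  - apply infinite_sum_finite_support. intros n Hn. apply Harea_out. lia.
  - eapply Rle_lt_trans.
    + apply partial_sum_bound with (a := (2 * r) ^ 2).
      intros n Hn. rewrite Harea_in by exact Hn. lra.
    + cbv beta. rewrite (Harea_out K (le_n K)). lra.
Qed.

Lemma QN_iterate (P : nat -> cpoly) (N : nat) :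
  (forall m : nat, (1 <= m <= N)%nat -> forall z : Cx, peval (P m) z = P1 z) ->
  forall z, QN P N z = Nat.iter N P1 z.
Proof.
  intros HP z. unfold QN.
  assert (H : forall k, (k <= N)%nat -> Qfrom P 0 k z = Nat.iter k P1 z).
  { induction k as [|k IH]; intros Hk; [reflexivity|].
    simpl. rewrite HP by lia. now rewrite IH by lia. }
  now apply H.
Qed.

Lemma cover_area_decay (G N : nat) :
  INR (G * 2 ^ N) * (2 * (1/100 * (7/10) ^ N)) ^ 2 < (INR G + 1) / 2500 * / (50/49) ^ N.
Proof.
  set (q := (49/50) ^ N).
  assert (Hq : 0 < q) by (apply pow_lt; lra).
  assert (Hlhs : INR (G * 2 ^ N) * (2 * (1/100 * (7/10) ^ N)) ^ 2 = INR G * q / 2500).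
  { rewrite mult_INR, pow_INR. unfold q.
    replace (49/50) with (INR 2 * ((7/10) * (7/10))) by (simpl; lra).
    rewrite !Rpow_mult_distr. field. }
  assert (Hrhs : / (50/49) ^ N = q).
  { unfold q. rewrite <- pow_inv. f_equal. field. }
  rewrite Hlhs, Hrhs. pose proof (pos_INR G). nra.
Qed.

Theorem lemma2p1 :
  exists lam : R, lam > 1 /\
  forall (d : nat) (K M : R),
    (2 <= d)%nat -> 2 <= K -> 1/2 <= M ->
    forall R0 : R, escape_radius d K M R0 ->
    exists c : R, c > 0 /\
    forall (P : nat -> cpoly) (N : nat),
      bounded_seq d K M P -> (1 <= N)%nat ->
      (forall m : nat, (1 <= m <= N)%nat -> forall z : Cx, peval (P m) z = P1 z) ->
      lebesgue_lt
        (fun z : Cx => Cnorm (QN P N z) < R0 /\ ~ filled_julia_P1 z)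
        (c * / lam ^ N).
Proof.
  exists (50/49). split; [lra|].
  intros d K M _ _ _ R0 _.
  destruct (disc_finite_cover R0 (1/100)) as [G [c0 Hcover]]; [lra|].
  exists ((INR G + 1) / 2500). split; [pose proof (pos_INR G); lra|].
  intros P N _ _ HP.
  apply lebesgue_lt_disc_cover with (c := pullback_centres c0 N) (K := (G * 2 ^ N)%nat)
    (r := 1/100 * (7/10) ^ N).
  - assert (0 < (7/10) ^ N) by (apply pow_lt; lra). lra.
  - intros z [Hz Hesc].
    rewrite QN_iterate, Cnorm_Cmod in Hz by exact HP.
    apply (pullback_cover c0 G R0 (1/100)); [lra | exact Hcover | | exact Hz].
    intros i _. now apply P1_orbit_escapes.
  - apply cover_area_decay.
Qed.
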